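(* Let $q\ge1$ and $\epsilon>0$ be constants, $k\ge4$ even, and $(T,d)$ a $k$-point metric space of constant doubling dimension $D$. Let $\Delta=\frac{4}{k^2}\mathrm{bp}^q(T)$ and $\Delta'=\frac{1}{2^q+1}\cdot\frac{4}{k^2}\mathrm{cl}^q(T)$ (so that $\frac12\Delta^{1/q}\le\Delta'^{1/q}\le\Delta^{1/q}$), let $z\in T$ minimize $\sum_{u\in T}d^q(z,u)$, and let $\delta>0$ be a constant with $1/\delta=\Theta(2^q/\epsilon)$. Consider the following cell decomposition: while some point of $T$ is not assigned to a cell, pick such a point $u$, open a new cell with center $u$, and add to it every not yet assigned point $v\in T$ with $d(v,u)\le\delta\max\{\Delta'^{1/q},\frac12 d(v,z)\}$. This decomposition produces $O\big((2^q/\epsilon)^D\log k\big)$ cells.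
   Context: $d^q(u,v)=d(u,v)^q$; $\mathrm{cl}^q(T)=\sum_{\{u,v\}\subseteq T}d^q(u,v)$; $\mathrm{bp}^q(T)=\min_{L\subseteq T,|L|=k/2}\sum_{\ell\in L,r\in T\setminus L}d^q(\ell,r)$. The doubling dimension of $(T,d)$ is the smallest $D\ge0$ such that every ball can be covered by at most $2^D$ balls of half its radius. *)

From HB Require Import structures.
From mathcomp Require Import all_boot all_order all_algebra.
From mathcomp Require Import all_classical all_reals.
From mathcomp Require Import exp.
Set Implicit Arguments. Unset Strict Implicit. Unset Printing Implicit Defensive.
Import Order.TTheory GRing.Theory Num.Theory.
Local Open Scope ring_scope.

Section Defs.
Variables (R : realType) (T : finType).
Implicit Types (d : T -> T -> R) (q D delta : R).

Definition is_metric d : Prop :=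
  [/\ forall x y, 0 <= d x y,
      forall x y, d x y = 0 <-> x = y,
      forall x y, d x y = d y x
    & forall x y w, d x w <= d x y + d y w].

Definition dq q d (u v : T) : R := d u v `^ q.

(* cl^q(T) = sum over unordered pairs {u,v} of d^q(u,v)
   (= half the sum over ordered pairs of distinct points) *)
Definition clq q d : R := (\sum_(u : T) \sum_(v : T | u != v) dq q d u v) / 2.

Definition doubling_prop d D : Prop :=
  forall (x : T) (r : R), 0 < r ->
    exists S : {set T}, (#|S|%:R <= 2 `^ D) /\
      forall y, d x y <= r -> exists2 c, c \in S & d c y <= r / 2.

Definition is_doubling_dim d D : Prop :=
  [/\ 0 <= D, doubling_prop d D &
      forall D', 0 <= D' -> doubling_prop d D' -> D <= D'].

Definition is_qmedian q d (z : T) : Prop :=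
  forall w : T, \sum_(u : T) dq q d z u <= \sum_(u : T) dq q d w u.

Definition Delta' q d : R :=
  (2 `^ q + 1)^-1 * (4 / (#|T|%:R ^+ 2)) * clq q d.

Definition close q d delta (z v u : T) : bool :=
  d v u <= delta * Num.max (Delta' q d `^ q^-1) (d v z / 2).

Definition assigned q d delta (z : T) (centers : seq T) (v : T) : bool :=
  has (close q d delta z v) centers.

(* valid_run acc s: starting with the already opened centers acc, the process
   opens the cells with centers s (in order), each new center being a not yet
   assigned point, and at the end every point is assigned. *)
Fixpoint valid_run q d delta (z : T) (acc s : seq T) : Prop :=
  match s with
  | [::] => forall v : T, assigned q d delta z acc v
  | u :: s' => ~~ assigned q d delta z acc u /\ valid_run q d delta z (rcons acc u) s'
  end.

End Defs.

From HB Require Import structures.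
From mathcomp Require Import all_boot all_order all_algebra.
From mathcomp Require Import all_classical all_reals.
From mathcomp Require Import exp.
From mathcomp Require Import ring lra.
Import Order.TTheory GRing.Theory Num.Theory.
Local Open Scope ring_scope.

(* Write r = Delta'^(1/q) and k = |T|.  The q-th power triangle inequality
   (a + b)^q <= 2^q (a^q + b^q) and the minimality of z give
   k d(u,z)^q <= 2^q * 4 cl^q(T) for every point u, hence d(u,z) <= 8 k r.
   Sort the cell centers by the least level i <= L = O(log k) such that
   d(x,z) <= 2^i r.  A center is never assigned to the cell of another one, so
   two distinct centers x, y are farther than delta * max(r, d(x,z)/2) apart
   (or the same with x and y swapped), which is at least delta 2^i r / 4 when
   both have level i.  Thus the centers of level i are a separated set in the
   ball of radius 2^i r around z; covering that ball with (2^D)^m balls of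
   radius 2^i r / 2^m, where 2^m ~ 8/delta = O(2^q/eps), leaves at most one
   center per small ball, so each level holds O((2^q/eps)^D) centers. *)

Section Metric.
Context {R : realType} {T : finType} {d : T -> T -> R}.
Hypothesis d_metric : is_metric d.

Lemma metric_ge0 x y : 0 <= d x y.
Proof. by case: d_metric. Qed.

Lemma metric_xx x : d x x = 0.
Proof. by case: d_metric => _ d0 _ _; apply/d0. Qed.

Lemma metric_gt0 x y : x != y -> 0 < d x y.
Proof.
case: d_metric => _ d0 _ _ xy; rewrite lt_neqAle metric_ge0 andbT eq_sym.
by apply: contra xy => /eqP/d0->.
Qed.

Lemma metric_sym x y : d x y = d y x.
Proof. by case: d_metric. Qed.

Lemma metric_triangle x y w : d x w <= d x y + d y w.
Proof. by case: d_metric. Qed.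

End Metric.

Section DoublingPacking.
Context {R : realType} {T : finType} {d : T -> T -> R} {D : R}.
Hypotheses (d_metric : is_metric d) (d_doubling : doubling_prop d D).

Lemma doubling_cover_iter x (rad : R) m : 0 < rad -> exists S : {set T},
  #|S|%:R <= (2 `^ D) ^+ m /\
  forall y, d x y <= rad -> exists2 c, c \in S & d c y <= rad / 2 ^+ m.
Proof.
move=> rad_gt0; elim: m => [|m [S [cardS coverS]]].
  exists [set x]; rewrite cards1 expr0 divr1; split=> // y xy.
  by exists x; rewrite ?set11.
have rad_m_gt0 : 0 < rad / 2 ^+ m by rewrite divr_gt0 // exprn_gt0.
have /fin_all_exists [F F_cover] := fun c => d_doubling c _ rad_m_gt0.
exists (\bigcup_(c in S) F c); split.
  apply: le_trans (_ : (\sum_(c in S) #|F c|)%:R <= _).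
    by rewrite ler_nat unstable.card_big_setU.
  rewrite natr_sum (le_trans (ler_sum _ (fun c _ => (F_cover c).1))) //.
  by rewrite sumr_const -[_ *+ #|S|]mulr_natr exprS ler_wpM2l ?powR_ge0.
move=> y /coverS [c cS cy]; have [_ /(_ y cy) [c' c'F c'y]] := F_cover c.
exists c'; first by apply/bigcupP; exists c.
by rewrite exprSr invfM mulrA.
Qed.

Lemma doubling_packing x (rad sep : R) m (P : {set T}) :
  0 < rad -> 2 * (rad / 2 ^+ m) <= sep ->
  {in P, forall y, d x y <= rad} ->
  {in P &, forall y y', y != y' -> sep < d y y'} ->
  #|P|%:R <= (2 `^ D) ^+ m.
Proof.
move=> rad_gt0 sep_ge inP sepP.
have [S [cardS coverS]] := doubling_cover_iter x rad m rad_gt0.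
have /fin_all_exists [f f_near] : forall y, exists c,
    d x y <= rad -> c \in S /\ d c y <= rad / 2 ^+ m.
  move=> y; have [/coverS [c cS cy]|] := boolP (d x y <= rad); last by exists x.
  by exists c.
have f_inj : {in P &, injective f}.
  move=> y y' yP y'P fyy'; apply/eqP/negPn/negP => /(sepP _ _ yP y'P).
  have [_ ny] := f_near y (inP _ yP); have [_ ny'] := f_near y' (inP _ y'P).
  have := metric_triangle d_metric y (f y) y'.
  by rewrite (metric_sym d_metric y (f y)) fyy' in ny *; lra.
apply: le_trans cardS; rewrite ler_nat -(card_in_imset f_inj).
apply/subset_leq_card/fintype.subsetP => _ /imsetP [y yP ->].
exact: (f_near y (inP _ yP)).1.
Qed.

End DoublingPacking.

Lemma powRD_le {R : realType} [q a b : R] : 0 <= q -> 0 <= a -> 0 <= b ->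
  (a + b) `^ q <= 2 `^ q * (a `^ q + b `^ q).
Proof.
move=> q_ge0; wlog ab : a b / a <= b.
  move=> H a_ge0 b_ge0; have [ab|/ltW ba] := leP a b; first exact: H.
  by rewrite addrC [_ `^ q + _]addrC; apply: H.
move=> a_ge0 b_ge0; apply: (@le_trans _ _ ((2 * b) `^ q)).
  by apply: ge0_ler_powR; rewrite ?nnegrE //; lra.
by rewrite powRM // ler_wpM2l ?powR_ge0 // lerDr powR_ge0.
Qed.

Section ClusterCost.
Context {R : realType} {T : finType} (q : R) (d : T -> T -> R).

Lemma clq_ge0 : 0 <= clq q d.
Proof.
rewrite divr_ge0 // sumr_ge0 // => u _; rewrite sumr_ge0 // => v _.
exact: powR_ge0.
Qed.

Lemma clq_gt0 : is_metric d -> (1 < #|T|)%N -> 0 < clq q d.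
Proof.
move=> d_metric /card_gt1P [u [v [_ _ uv]]].
rewrite divr_gt0 // (bigD1 u) //= ltr_wpDr ?sumr_ge0 // => [w _|].
  by rewrite sumr_ge0 // => w' _; exact: powR_ge0.
rewrite (bigD1 v) //= ltr_wpDr ?sumr_ge0 // => [w _|]; first exact: powR_ge0.
exact/powR_gt0/metric_gt0.
Qed.

Lemma Delta'_ge0 : 0 <= Delta' q d.
Proof.
by rewrite /Delta' mulr_ge0 ?clq_ge0 // mulr_ge0 ?invr_ge0 ?addr_ge0 ?powR_ge0 ?divr_ge0 ?exprn_ge0.
Qed.

Lemma Delta'_gt0 : is_metric d -> (1 < #|T|)%N -> 0 < Delta' q d.
Proof.
move=> d_metric T_gt1; have k_gt0 : 0 < #|T|%:R :> R by rewrite ltr0n; exact: ltnW.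
by rewrite /Delta' mulr_gt0 ?clq_gt0 // mulr_gt0 ?invr_gt0 ?ltr_wpDl ?powR_ge0 ?divr_gt0 ?exprn_gt0.
Qed.

Lemma clq_Delta' : (0 < #|T|)%N ->
  4 * clq q d = (2 `^ q + 1) * #|T|%:R ^+ 2 * Delta' q d.
Proof.
move=> T_gt0; rewrite /Delta'.
have q1_neq0 : 2 `^ q + 1 != 0 :> R by rewrite gt_eqF // ltr_wpDl ?powR_ge0.
have k_neq0 : #|T|%:R != 0 :> R by rewrite pnatr_eq0 -lt0n.
by field; rewrite k_neq0 q1_neq0.
Qed.

End ClusterCost.

Section MedianBounds.
Context {R : realType} {T : finType} {d : T -> T -> R} {q : R} {z : T}.
Hypotheses (d_metric : is_metric d) (q_ge1 : 1 <= q) (z_median : is_qmedian q d z).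

Let q_gt0 : 0 < q. Proof. exact: lt_le_trans q_ge1. Qed.

Lemma sum_dq_le_clq u : \sum_v dq q d u v <= 2 * clq q d.
Proof.
rewrite /clq mulrC divfK ?pnatr_eq0 // [X in _ <= X](bigD1 u) //=.
rewrite (bigD1 u) //= /dq metric_xx // powR0 ?gt_eqF // add0r.
rewrite (eq_bigl (fun v => u != v)) => [|v]; last by rewrite eq_sym.
rewrite lerDl sumr_ge0 // => w _; rewrite sumr_ge0 // => v _; exact: powR_ge0.
Qed.

Lemma median_dist_powR_le u : #|T|%:R * d u z `^ q <= 2 `^ q * (4 * clq q d).
Proof.
have split_at v : d u z `^ q <= 2 `^ q * (dq q d u v + dq q d z v).
  apply: le_trans _ (powRD_le (ltW q_gt0) (metric_ge0 d_metric u v) (metric_ge0 d_metric z v)).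
  rewrite ge0_ler_powR ?nnegrE ?addr_ge0 ?metric_ge0 ?(ltW q_gt0) //.
  by rewrite (metric_sym d_metric z v) metric_triangle.
rewrite mulr_natl -sumr_const (le_trans (ler_sum _ (fun v _ => split_at v))) //.
rewrite -mulr_sumr ler_wpM2l ?powR_ge0 // big_split /=.
have := z_median u; have := sum_dq_le_clq u; lra.
Qed.

Lemma dist_median_le u : d u z <= 8 * #|T|%:R * Delta' q d `^ q^-1.
Proof.
have T_gt0 : (0 < #|T|)%N by apply/card_gt0P; exists u.
set k := #|T|%:R : R; have k_ge1 : 1 <= k by rewrite ler1n.
have two_q : 2 <= 2 `^ q by apply: le1r_powR; rewrite ?ler1n.
have k_q : k <= k `^ q by apply: le1r_powR.
have median_cost : d u z `^ q <= 2 `^ q * (2 `^ q + 1) * k * Delta' q d.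
  rewrite -(ler_pM2l (_ : 0 < k)); last lra.
  have -> : k * (2 `^ q * (2 `^ q + 1) * k * Delta' q d)
      = 2 `^ q * ((2 `^ q + 1) * k ^+ 2 * Delta' q d) by ring.
  by rewrite -clq_Delta' // median_dist_powR_le.
have eight_q : 8 `^ q = 2 `^ q * (2 `^ q * 2 `^ q).
  by rewrite -!powRM ?mulr_ge0 ?ler0n //; congr (_ `^ _); lra.
have r_q : (8 * k * Delta' q d `^ q^-1) `^ q = 8 `^ q * k `^ q * Delta' q d.
  rewrite powRM ?mulr_ge0 ?powR_ge0 ?ler0n // powRM ?ler0n //.
  by rewrite -powRrM mulVf ?gt_eqF // powRr1 // Delta'_ge0.
have powq_le : d u z `^ q <= (8 * k * Delta' q d `^ q^-1) `^ q.
  rewrite r_q eight_q; apply: le_trans median_cost _.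
  rewrite ler_wpM2r ?Delta'_ge0 // ler_pM ?mulr_ge0 ?addr_ge0 ?powR_ge0 //.
  by rewrite ler_wpM2l ?powR_ge0 //; nra.
rewrite leNgt; apply: contraTN powq_le => lt; rewrite -ltNge.
by apply: gt0_ltr_powR; rewrite ?nnegrE ?metric_ge0 ?mulr_ge0 ?powR_ge0 ?ler0n.
Qed.

End MedianBounds.

Section RunSeparation.
Context {R : realType} {T : finType} {d : T -> T -> R} {q delta : R} {z : T}.
Hypotheses (d_metric : is_metric d) (delta_ge0 : 0 <= delta).

Local Notation close := (close q d delta z).
Local Notation apart x y := (~~ close x y || ~~ close y x).

Lemma close_refl u : close u u.
Proof.
by rewrite /close metric_xx // mulr_ge0 // le_max powR_ge0.
Qed.

Lemma valid_run_apart acc s : valid_run q d delta z acc s -> uniq acc ->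
  {in acc &, forall x y, x != y -> apart x y} ->
  uniq (acc ++ s) /\ {in acc ++ s &, forall x y, x != y -> apart x y}.
Proof.
elim: s acc => [|u s IH] acc /=; first by rewrite cats0.
move=> [u_new run] acc_uniq acc_apart.
have u_far c : c \in acc -> ~~ close u c.
  by move=> cA; apply: contra u_new => uc; apply/hasP; exists c.
have u_notin : u \notin acc.
  by apply: contra u_new => uA; apply/hasP; exists u; rewrite ?close_refl.
rewrite -cat_rcons; apply: IH => //; first by rewrite rcons_uniq u_notin.
move=> x y; rewrite !mem_rcons !inE.
move=> /predU1P[->|xA] /predU1P[->|yA]; rewrite ?eqxx // => xy.
- by rewrite u_far.
- by rewrite u_far ?orbT.
- exact: acc_apart.
Qed.

Lemma valid_run_uniq_apart s : valid_run q d delta z [::] s ->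
  uniq s /\ {in s &, forall x y, x != y -> apart x y}.
Proof. by move/valid_run_apart; apply. Qed.

End RunSeparation.

Definition dyadic_level {R : realType} (r t : R) (L : nat) : nat :=
  find (fun i => t <= 2 ^+ i * r) (iota 0 L.+1).

Section DyadicLevel.
Context {R : realType} (r t : R) (L : nat).

Lemma dyadic_level_le : t <= 2 ^+ L * r ->
  (dyadic_level r t L <= L)%N /\ t <= 2 ^+ dyadic_level r t L * r.
Proof.
move=> tL; have has_L : has (fun i => t <= 2 ^+ i * r) (iota 0 L.+1).
  by apply/hasP; exists L; rewrite // mem_iota add0n ltnSn.
have lvl_lt : (dyadic_level r t L < L.+1)%N by rewrite -[L.+1](size_iota 0) -has_find.
split=> //; have := nth_find 0%N has_L; rewrite nth_iota //.
Qed.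

Lemma dyadic_level_lb : 0 <= r -> 2 ^+ dyadic_level r t L * r <= 4 * Num.max r (t / 2).
Proof.
move=> r_ge0; have := le_max r r (t / 2); have := le_max (t / 2) r (t / 2).
rewrite !lexx orbT /=; case E : (dyadic_level r t L) => [|l] t_max r_max.
  by rewrite expr0 mul1r; lra.
have l_lt : (l < dyadic_level r t L)%N by rewrite E.
have := before_find 0%N l_lt; rewrite nth_iota; last first.
  by apply: leq_trans l_lt _; rewrite -[L.+1](size_iota 0) find_size.
by rewrite /= add0n => /negbT; rewrite -ltNge exprS -mulrA; lra.
Qed.

End DyadicLevel.

Section CellCount.
Context {R : realType} {T : finType} {d : T -> T -> R} {D q delta : R} {z : T}.
Hypotheses (d_metric : is_metric d) (d_doubling : doubling_prop d D)
  (q_ge1 : 1 <= q) (z_median : is_qmedian q d z) (delta_gt0 : 0 < delta)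
  (T_gt1 : (1 < #|T|)%N).

Let r := Delta' q d `^ q^-1.

Let r_gt0 : 0 < r.
Proof. exact/powR_gt0/Delta'_gt0. Qed.

Lemma far_from_center x y L : ~~ close q d delta z x y ->
  delta * (2 ^+ dyadic_level r (d x z) L * r / 4) < d x y.
Proof.
rewrite /close -ltNge; apply: le_lt_trans; rewrite ler_wpM2l ?(ltW delta_gt0) //.
by rewrite ler_pdivrMr // [_ * 4]mulrC; apply: dyadic_level_lb; exact: ltW.
Qed.

Lemma dyadic_level_dist_median x L : 8 * #|T|%:R <= 2 ^+ L :> R ->
  (dyadic_level r (d x z) L <= L)%N /\ d x z <= 2 ^+ dyadic_level r (d x z) L * r.
Proof.
move=> kL; apply: dyadic_level_le; apply: le_trans (dist_median_le d_metric q_ge1 z_median x) _.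
by rewrite ler_wpM2r // ltW.
Qed.

Lemma level_class_card s L m (i : nat) :
  valid_run q d delta z [::] s -> 8 * #|T|%:R <= 2 ^+ L :> R -> 8 <= delta * 2 ^+ m ->
  #|[set x | (x \in s) && (dyadic_level r (d x z) L == i)]|%:R <= (2 `^ D) ^+ m.
Proof.
move=> run kL dm; set a := 2 ^+ i * r.
have a_gt0 : 0 < a by rewrite mulr_gt0 // exprn_gt0.
have [_ s_apart] := valid_run_uniq_apart d_metric (ltW delta_gt0) s run.
apply: (doubling_packing d_metric d_doubling z a (delta * (a / 4))) => //.
- have twom_gt0 : 0 < 2 ^+ m :> R by rewrite exprn_gt0.
  have -> : 2 * (a / 2 ^+ m) = a / 4 * (8 / 2 ^+ m) by field; rewrite gt_eqF.
  by rewrite mulrC ler_wpM2r ?divr_ge0 ?(ltW a_gt0) // ler_pdivrMr.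
- move=> y; rewrite inE => /andP[_ /eqP yi].
  rewrite /a -yi (metric_sym d_metric z); exact: (dyadic_level_dist_median y L kL).2.
- move=> y y'; rewrite !inE => /andP[ys /eqP yi] /andP[y's /eqP y'i] yy'.
  have /orP[] := s_apart _ _ ys y's yy' => /(far_from_center _ _ L).
    by rewrite /a yi.
  by rewrite /a y'i (metric_sym d_metric y).
Qed.

Lemma valid_run_size_le [s L m] :
  valid_run q d delta z [::] s -> 8 * #|T|%:R <= 2 ^+ L :> R -> 8 <= delta * 2 ^+ m ->
  (size s)%:R <= L.+1%:R * (2 `^ D) ^+ m.
Proof.
move=> run kL dm; have [s_uniq _] := valid_run_uniq_apart d_metric (ltW delta_gt0) s run.
pose lvl x := dyadic_level r (d x z) L.
pose cls (i : 'I_L.+1) := [set x | (x \in s) && (lvl x == i)].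
have size_le : (size s <= \sum_(i < L.+1) #|cls i|)%N.
  rewrite -(card_uniqP s_uniq); apply: leq_trans (unstable.card_big_setU _ _ _).
  apply/subset_leq_card/fintype.subsetP => x xs; apply/bigcupP.
  have lvl_lt : (lvl x < L.+1)%N by rewrite ltnS; exact: (dyadic_level_dist_median x L kL).1.
  by exists (Ordinal lvl_lt); rewrite ?inE ?xs /=.
apply: le_trans (_ : (\sum_(i < L.+1) #|cls i|)%:R <= _); first by rewrite ler_nat.
rewrite natr_sum mulr_natl -[X in _ *+ X](card_ord L.+1) -sumr_const.
by apply: ler_sum => i _; apply: level_class_card.
Qed.

End CellCount.

Lemma pow2_bracket {R : realType} (x : R) :
  exists m : nat, x <= 2 ^+ m /\ 2 ^+ m <= Num.max 1 (2 * x).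
Proof.
have ex_pow : exists n, x <= 2 ^+ n.
  exists (Num.truncn x); apply/ltW/(lt_le_trans (truncnS_gt x)).
  by rewrite -natrX ler_nat ltn_expl.
case: (ex_minnP ex_pow) => -[x1 _|m xm m_min].
  by exists 0%N; rewrite le_max lexx.
exists m.+1; split=> //; rewrite le_max exprS; apply/orP; right.
have : ~~ (x <= 2 ^+ m) by apply/negP => /m_min; rewrite ltnn.
by rewrite -ltNge; lra.
Qed.

Lemma powR2_exprn {R : realType} (D : R) m : (2 `^ D) ^+ m = (2 ^+ m) `^ D.
Proof. by rewrite -powR_mulrn ?powR_ge0 // powRAC powR_mulrn. Qed.

Lemma succn_le_ln {R : realType} (k : R) L : 2 <= k -> 2 ^+ L <= k ^+ 3 ->
  L.+1%:R <= 4 / ln 2 * ln k.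
Proof.
move=> k_ge2 Lk; have ln2_gt0 : 0 < ln (2 : R) by apply: ln_gt0; lra.
have ln2k : ln 2 <= ln k by rewrite ler_ln ?posrE //; lra.
have : ln (2 ^+ L) <= ln (k ^+ 3) by rewrite ler_ln ?posrE ?exprn_gt0 //; lra.
rewrite !lnXn //; last lra.
rewrite -[ln 2 *+ L]mulr_natr -[ln k *+ 3]mulr_natr mulrAC ler_pdivlMr // -natr1.
nra.
Qed.

Lemma log_depth_bound {R : realType} [k : R] : 4 <= k ->
  exists L : nat, 8 * k <= 2 ^+ L /\ L.+1%:R <= 4 / ln 2 * ln k.
Proof.
move=> k_ge4; have [L [kL Lk]] := pow2_bracket (8 * k).
exists L; split=> //; apply: succn_le_ln; first lra.
have k3 : 16 * k <= k ^+ 3 by rewrite !exprS expr0 mulr1; nra.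
by apply: le_trans Lk _; rewrite ge_max; apply/andP; split; nra.
Qed.

Lemma separation_scale_bound {R : realType} [D c Q delta : R] :
  0 <= D -> 0 < c -> 1 <= Q -> c / Q <= delta ->
  exists m : nat, 8 <= delta * 2 ^+ m /\ (2 `^ D) ^+ m <= (Num.max 1 (16 / c) * Q) `^ D.
Proof.
move=> D_ge0 c_gt0 Q_ge1 delta_ge; have [m [Qm mQ]] := pow2_bracket (8 * Q / c).
have MQ_ge1 : 1 <= Num.max 1 (16 / c) * Q.
  by rewrite -[X in X <= _]mulr1 ler_pM ?ler01 // le_max lexx.
exists m; split.
  have -> : 8 = c / Q * (8 * Q / c) by field; apply/andP; split; lra.
  by apply: ler_pM delta_ge Qm; rewrite divr_ge0 //; lra.
rewrite powR2_exprn ge0_ler_powR // ?nnegrE ?exprn_ge0 //; first lra.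
apply: le_trans mQ _; rewrite ge_max MQ_ge1 /=.
have -> : 2 * (8 * Q / c) = 16 / c * Q by field; lra.
by rewrite ler_wpM2r ?le_max ?lexx ?orbT //; lra.
Qed.

Theorem lemma13 (R : realType) (D c1 c2 : R) :
  0 <= D -> 0 < c1 -> c1 <= c2 ->
  exists C : R, 0 < C /\
  forall (q eps delta : R) (T : finType) (d : T -> T -> R) (z : T),
    1 <= q -> 0 < eps <= 1 ->
    ~~ odd #|T| -> (4 <= #|T|)%N ->
    is_metric d -> is_doubling_dim d D ->
    c1 * eps / 2 `^ q <= delta <= c2 * eps / 2 `^ q ->
    is_qmedian q d z ->
    forall s : seq T, valid_run q d delta z [::] s ->
      (size s)%:R <= C * (2 `^ q / eps) `^ D * ln (#|T|%:R : R).
Proof.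
move=> D_ge0 c1_gt0 _; set M := Num.max 1 (16 / c1).
have M_gt0 : 0 < M by rewrite lt_max ltr01.
have ln2_gt0 : 0 < ln (2 : R) by apply: ln_gt0; lra.
exists (4 / ln 2 * M `^ D); split; first by rewrite !mulr_gt0 ?invr_gt0 ?powR_gt0.
move=> q eps delta T d z q_ge1 /andP[eps_gt0 eps_le1] _ T_ge4 d_metric
  [_ d_doubling _] /andP[delta_ge _] z_median s run.
set k := #|T|%:R : R; set Q := 2 `^ q / eps.
have two_q : 2 <= 2 `^ q by apply: le1r_powR; rewrite ?ler1n.
have Q_ge1 : 1 <= Q by rewrite ler_pdivlMr // mul1r; lra.
have delta_gt0 : 0 < delta by apply: lt_le_trans delta_ge; rewrite !divr_gt0 ?mulr_gt0 ?powR_gt0.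
rewrite -[_ * eps / _]mulrA -invf_div -/Q in delta_ge.
have [|L [kL L_le]] := @log_depth_bound _ k; first by rewrite (ler_nat R 4).
have [m [delta_m m_le]] := separation_scale_bound D_ge0 c1_gt0 Q_ge1 delta_ge.
have size_le := valid_run_size_le d_metric d_doubling q_ge1 z_median delta_gt0
  (leq_trans (isT : 1 < 4)%N T_ge4) run kL delta_m.
have -> : 4 / ln 2 * M `^ D * Q `^ D * ln k = (4 / ln 2 * ln k) * (M * Q) `^ D.
  by rewrite (powRM D (ltW M_gt0) (le_trans ler01 Q_ge1)); ring.
by apply: le_trans size_le (ler_pM _ _ L_le m_le); rewrite ?ler0n ?exprn_ge0 ?powR_ge0.
Qed.
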